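(* Let $G$ be a finite solvable group of order $n$ and $H$ be a subgroup of $G$ of order $d$. Then $$d_{L(G)^*}(H)\leq d+\frac{n}{d}-2.$$ Moreover, equality holds if and only if $H$ is normal in $G$ and both $H$ and $G/H$ are elementary abelian $2$-groups.
   Context: The subgroup graph $L(G)^*$ of a finite group $G$ is the simple undirected graph whose vertices are the subgroups of $G$, two subgroups $H_1,H_2$ being adjacent iff one is a maximal subgroup of the other (i.e. $H_1<H_2$ with no subgroup strictly between them, or vice versa). $d_{L(G)^*}(H)$ denotes the degree of $H$ in this graph, i.e. the number of maximal subgroups of $H$ plus the number of subgroups $K\leq G$ containing $H$ as a maximal subgroup. The trivial group counts as an elementary abelian $2$-group. *)

From mathcomp Require Import all_boot all_fingroup all_solvable.
Set Implicit Arguments. Unset Strict Implicit. Unset Printing Implicit Defensive.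
Local Open Scope group_scope.

(* Degree of the subgroup H in the subgroup graph L(G)^* :
   number of maximal subgroups of H plus number of subgroups K of G
   having H as a maximal subgroup. *)
Definition subgraph_deg (gT : finGroupType) (G H : {group gT}) : nat :=
  #|[set M : {group gT} | maximal M H]|
  + #|[set K : {group gT} | (K \subset G) && maximal H K]|.

From mathcomp Require Import all_boot all_fingroup all_solvable.
From mathcomp Require Import zify.

(* The degree of H is the number of its maximal subgroups plus the number of
   subgroups K <= G in which H is maximal.  For the latter, the sets K \ H are
   pairwise disjoint subsets of G \ H with at least |H| elements each, so there
   are at most |G : H| - 1 of them, with equality iff each has |K : H| = 2 and
   they cover G \ H, i.e. iff H <| G and G / H is an elementary abelian
   2-group.  For the maximal subgroups of a solvable H, pick a minimal normal
   subgroup N, which is elementary abelian.  The maximal subgroups containing N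
   are those of H / N; the others are complements of N.  If N is central, its
   complements are normal and there are at most |H : N| of them.  Otherwise a
   complement M is determined up to N-conjugacy by C_M(N), a normal complement
   of N in C_H(N); there are at most |C_M(N)| <= |H : N| / 2 of those, and
   |N| > 2.  Either way N has at most |H : N| (|N| - 1) complements, with
   equality only if |N| = 2, and induction bounds the number of maximal
   subgroups by |H| - 1, with equality exactly for elementary abelian
   2-groups. *)

Set Implicit Arguments.
Unset Strict Implicit.
Unset Printing Implicit Defensive.

Local Open Scope group_scope.

Lemma card_bigcup_disjoint (I T : finType) (J : {pred I}) (F : I -> {set T}) :
    {in J &, forall i j, i != j -> [disjoint F i & F j]} ->
  #|\bigcup_(i in J) F i| = \sum_(i in J) #|F i|.
Proof.
move=> disjF; pose F' i := if i \in J then F i else set0.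
have -> : \bigcup_(i in J) F i = \bigcup_i F' i.
  by rewrite big_mkcond; apply: eq_bigr => i _; rewrite /F'; case: ifP.
rewrite -sum1_card partition_disjoint_bigcup => [|i j neq_ij]; last first.
  rewrite /F'; case: ifP => Ji; last by rewrite -setI_eq0 set0I.
  by case: ifP => Jj; [apply: disjF | rewrite -setI_eq0 setI0].
rewrite [RHS]big_mkcond; apply: eq_bigr => i _; rewrite sum1_card /F'.
by case: ifP; rewrite ?cards0.
Qed.

Lemma card_le_fibers (T U : finType) (A : {pred T}) (B : {pred U}) (f : T -> U) k :
    {in A, forall x, f x \in B} ->
    (forall y, y \in B -> #|[set x in A | f x == y]| <= k) ->
  #|A| <= #|B| * k.
Proof.
move=> fAB le_k; rewrite -sum1_card (partition_big f (mem B) fAB) /= -sum_nat_const.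
by apply: leq_sum => y By; rewrite sum1dep_card; apply: le_k.
Qed.

(** * Maximal subgroups and maximal overgroups *)

Section MaximalSubgroups.

Variable gT : finGroupType.
Implicit Types E G H K L M : {group gT}.

Definition max_subgroups H := [set M : {group gT} | maximal M H].

Definition max_overgroups G H :=
  [set K : {group gT} | (K \subset G) && maximal H K].

Lemma subgraph_degE G H :
  subgraph_deg G H = #|max_subgroups H| + #|max_overgroups G H|.
Proof. by []. Qed.

Lemma maximal_sandwich H K M :
  maximal H K -> H \subset M -> M \subset K -> M :=: H \/ M :=: K.
Proof.
move=> maxHK; have /maximal_eqP[_ maxH] : maximal_eq H K by rewrite /maximal_eq maxHK orbT.
exact: maxH.
Qed.

Lemma index_proper_leqif H K :
  H \proper K -> #|H| <= #|K| - #|H| ?= iff (#|K : H| == 2).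
Proof.
move=> ltHK; have := Lagrange (proper_sub ltHK).
have := indexg_gt1 K H; rewrite proper_subn // => /= gt1_iKH.
have := cardG_gt0 H; move: #|K : H| gt1_iKH => i gt1_i gt0_H <-.
apply/leqifP; case: eqP => [-> | /eqP ne2_i]; first by lia.
by rewrite ltn_subRL addnn -muln2 ltn_pmul2l //; lia.
Qed.

Lemma join_cycle_index2 L y :
  y \in 'N(L) -> y ^+ 2 \in L -> y \notin L -> #|L <*> <[y]> : L| = 2.
Proof.
move=> Ny y2L notLy.
have nL_Ly : L <*> <[y]> \subset 'N(L) by rewrite join_subG normG cycle_subG.
rewrite -card_quotient // quotientYidl ?cycle_subG // quotient_cycle //.
have : #[coset L y] %| 2 by rewrite order_dvdn -morphX //= coset_id.
have : #[coset L y] != 1%N.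
  by rewrite order_eq1; apply: contra notLy => /eqP; apply: coset_idr.
by rewrite /order; move: #|_| => k; case: k => [|[|[|k]]].
Qed.

Section Overgroups.

Variables G H : {group gT}.
Hypothesis sHG : H \subset G.

Let X := max_overgroups G H.
Let U := \bigcup_(K in X) (gval K :\: H).

Lemma max_overgroups_proper K : K \in X -> H \proper K.
Proof. by rewrite inE => /andP[_ /maxgroupp]. Qed.

Lemma max_overgroupsI K1 K2 : K1 \in X -> K2 \in X -> K1 != K2 -> K1 :&: K2 = H.
Proof.
move=> XK1 XK2 neK12; move: (XK1) (XK2); rewrite !inE => /andP[_ maxK1] /andP[_ maxK2].
have sH_K12 : H \subset K1 :&: K2.
  by rewrite subsetI !proper_sub ?max_overgroups_proper.
have [// | eqK1] := maximal_sandwich maxK1 sH_K12 (subsetIl _ _).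
have [// | eqK2] := maximal_sandwich maxK2 sH_K12 (subsetIr _ _).
by case/eqP: neK12; apply: val_inj; rewrite /= -eqK1 eqK2.
Qed.

Lemma card_max_overgroups_cover : #|U| = \sum_(K in X) (#|K| - #|H|).
Proof.
rewrite card_bigcup_disjoint => [|K1 K2 XK1 XK2 neK12]; last first.
  rewrite -setI_eq0 -subset0; apply/subsetP=> x.
  rewrite !inE => /andP[/andP[notHx K1x] /andP[_ K2x]]; case/negP: notHx.
  by rewrite -(max_overgroupsI XK1 XK2 neK12) inE K1x.
apply: eq_bigr => K /max_overgroups_proper/proper_sub sHK.
by rewrite cardsD (setIidPr sHK).
Qed.

Lemma card_max_overgroups_leqif :
  #|X| * #|H| <= #|G| - #|H|
    ?= iff [forall (K | K \in X), #|K : H| == 2] && (G :\: H \subset U).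
Proof.
rewrite -sum_nat_const -{2}(setIidPr sHG) -cardsD.
apply: leqif_trans (leqif_sum (fun K XK => index_proper_leqif _)) _.
  exact: max_overgroups_proper.
rewrite -card_max_overgroups_cover; apply: subset_leqif_card.
by apply/bigcupsP=> K; rewrite inE => /andP[sKG _]; apply: setSD.
Qed.

Lemma max_overgroups_cover_normal :
    [forall (K | K \in X), #|K : H| == 2] -> G :\: H \subset U ->
  H <| G /\ 2.-abelem (G / H).
Proof.
move=> /forall_inP idx2 coverGH.
have overK g : g \in G -> g \notin H ->
    exists2 K : {group gT}, H <| K & (g \in K) && (#|K / H| == 2).
  move=> Gg notHg; have /bigcupP[K XK /setDP[Kg _]] : g \in U.
    by apply: (subsetP coverGH); rewrite inE notHg.
  have sHK := proper_sub (max_overgroups_proper XK).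
  have nsHK := index2_normal sHK (eqP (idx2 K XK)).
  by exists K; rewrite // Kg card_quotient ?normal_norm ?idx2.
have nsHG : H <| G.
  rewrite /normal sHG; apply/subsetP=> g Gg.
  have [Hg | notHg] := boolP (g \in H); first exact: subsetP (normG H) g Hg.
  by have [K /andP[_ nHK] /andP[Kg _]] := overK g Gg notHg; apply: subsetP nHK g Kg.
split=> //; apply: exponent2_abelem; apply/exponentP=> _ /morphimP[g Ng Gg ->].
have [Hg | notHg] := boolP (g \in H); first by rewrite /= coset_id ?expg1n.
have [K /andP[_ nHK] /andP[Kg /eqP oKH]] := overK g Gg notHg.
by rewrite -oKH expg_cardG // mem_quotient.
Qed.

Lemma normal_abelem2_max_overgroups :
    H <| G -> 2.-abelem (G / H) ->
  [forall (K | K \in X), #|K : H| == 2] && (G :\: H \subset U).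
Proof.
move=> nsHG abelGH; have [_ expGH] := abelemP (isT : prime 2) abelGH.
pose HY g := (H <*> <[g]>)%G.
have HYg g : g \in HY g by rewrite (subsetP (joing_subr _ _)) ?cycle_id.
have HY_index g : g \in G -> g \notin H -> #|HY g : H| = 2.
  move=> Gg notHg; have Ng := subsetP (normal_norm nsHG) g Gg.
  apply: join_cycle_index2 => //; apply: coset_idr; first by rewrite groupX.
  by rewrite morphX //= expGH ?mem_quotient.
apply/andP; split.
  apply/forall_inP=> K XK; have [_ [g Kg notHg]] := properP (max_overgroups_proper XK).
  move: XK; rewrite inE => /andP[sKG maxHK].
  have sHYK : HY g \subset K.
    by rewrite join_subG cycle_subG Kg (proper_sub (maxgroupp maxHK)).
  have [eqHY | eqHYK] := maximal_sandwich maxHK (joing_subl _ _) sHYK.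
    by case/negP: notHg; rewrite -eqHY.
  by rewrite -eqHYK HY_index ?(subsetP sKG).
apply/subsetP=> g /setDP[Gg notHg]; apply/bigcupP; exists (HY g).
  rewrite inE join_subG sHG cycle_subG Gg.
  by rewrite p_index_maximal ?joing_subl ?HY_index.
by rewrite inE notHg HYg.
Qed.

Lemma card_max_overgroups_leqif_index :
  #|X| <= #|G : H| - 1 ?= iff (H <| G) && 2.-abelem (G / H).
Proof.
have mulH_mono : {mono muln^~ #|H| : m n / m <= n}.
  by move=> m n; rewrite leq_pmul2r.
have condE : [forall (K | K \in X), #|K : H| == 2] && (G :\: H \subset U)
              = (H <| G) && 2.-abelem (G / H).
  apply/idP/andP=> [/andP[idx2 coverGH] | [nsHG abelGH]].
    exact: max_overgroups_cover_normal.
  exact: normal_abelem2_max_overgroups.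
rewrite -condE -(mono_leqif mulH_mono).
by rewrite mulnBl mul1n [(#|G : H| * _)%N]mulnC Lagrange //; apply: card_max_overgroups_leqif.
Qed.

End Overgroups.

Lemma abelem2_card_max_overgroups E L :
  2.-abelem E -> L \subset E -> #|max_overgroups E L| = #|E : L| - 1.
Proof.
move=> abelE sLE; have nsLE : L <| E by rewrite -sub_abelian_normal ?(abelem_abelian abelE).
by apply/eqP; rewrite (card_max_overgroups_leqif_index sLE) nsLE quotient_abelem.
Qed.

Lemma abelem2_max_overgroupsI E M0 L K :
    2.-abelem E -> maximal M0 E -> maximal L M0 ->
    K \in max_overgroups E L -> K != M0 ->
  maximal K E /\ K :&: M0 = L.
Proof.
move=> abelE maxM0 maxL; rewrite inE => /andP[sKE maxLK] neKM0.
have pE := abelem_pgroup abelE; have sM0E := proper_sub (maxgroupp maxM0).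
have sLK := proper_sub (maxgroupp maxLK); have sLM0 := proper_sub (maxgroupp maxL).
have iKE : #|E : K| = 2.
  apply/eqP; rewrite -(eqn_pmul2r (isT : 0 < 2)).
  rewrite -{1}(p_maximal_index (pgroupS sKE pE) maxLK) Lagrange_index //.
  rewrite -(Lagrange_index sM0E sLM0) (p_maximal_index pE maxM0).
  by rewrite (p_maximal_index (pgroupS sM0E pE) maxL).
have maxKE : maximal K E by rewrite p_index_maximal ?iKE.
split=> //; have sL_KM0 : L \subset K :&: M0 by rewrite subsetI sLK sLM0.
have [// | eqKM0] := maximal_sandwich maxLK sL_KM0 (subsetIl _ _).
have sKM0 : K \subset M0 by rewrite -eqKM0 subsetIr.
have [eqM0K | eqM0E] := maximal_sandwich maxKE sKM0 sM0E.
  by case/eqP: neKM0; apply: val_inj.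
by case/andP: (maxgroupp maxM0); rewrite eqM0E subxx.
Qed.

Lemma abelem2_card_max_subgroups E :
  2.-abelem E -> #|E| - 1 <= #|max_subgroups E|.
Proof.
have [n] := ubnP #|E|; elim: n E => // n IHn E ltEn abelE.
have [trivE | [M0 maxM0 _]] := maximal_exists (sub1G E).
  by rewrite -trivE cards1.
have pE := abelem_pgroup abelE; have sM0E := proper_sub (maxgroupp maxM0).
have iM0 : #|E : M0| = 2 := p_maximal_index pE maxM0.
(* Each maximal subgroup of M0 lies in exactly two maximal subgroups of E
   other than M0. *)
pose F L := max_overgroups E L :\ M0.
have F_maxI L K : L \in max_subgroups M0 -> K \in F L -> maximal K E /\ K :&: M0 = L.
  by rewrite inE => maxL /setD1P[neKM0 XK]; apply: abelem2_max_overgroupsI.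
have cardF L : L \in max_subgroups M0 -> #|F L| = 2.
  rewrite inE => maxL; have sLM0 := proper_sub (maxgroupp maxL).
  have := abelem2_card_max_overgroups abelE (subset_trans sLM0 sM0E).
  rewrite -(Lagrange_index sM0E sLM0) iM0 (p_maximal_index (pgroupS sM0E pE) maxL).
  by rewrite (cardsD1 M0) inE sM0E maxL => -[].
have F_disjoint : {in max_subgroups M0 &, forall L1 L2,
    L1 != L2 -> [disjoint F L1 & F L2]}.
  move=> L1 L2 maxL1 maxL2 neL12; rewrite -setI_eq0 -subset0.
  apply/subsetP=> K; rewrite inE => /andP[FK1 FK2]; case/eqP: neL12.
  by apply: val_inj; rewrite /= -(F_maxI L1 K maxL1 FK1).2 (F_maxI L2 K maxL2 FK2).2.
have sFmax : \bigcup_(L in max_subgroups M0) F L \subset max_subgroups E :\ M0.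
  apply/bigcupsP=> L maxL; apply/subsetP=> K FK.
  by rewrite !inE (F_maxI L K maxL FK).1 andbT; case/setD1P: FK.
have := subset_leq_card sFmax; rewrite card_bigcup_disjoint //.
rewrite (eq_bigr _ cardF) sum_nat_const (cardsD1 M0 (max_subgroups E)) [M0 \in _]inE maxM0.
have := IHn M0 (leq_trans (proper_card (maxgroupp maxM0)) ltEn) (abelemS sM0E abelE).
have := Lagrange sM0E; rewrite iM0; have := cardG_gt0 M0.
by clear; lia.
Qed.

End MaximalSubgroups.

Lemma card_max_subgroups_over (gT : finGroupType) (H N : {group gT}) :
    N <| H ->
  #|max_subgroups H :&: [set M : {group gT} | N \subset M]| <= #|max_subgroups (H / N)|.
Proof.
move=> nsNH; set A := _ :&: _.
have sNM M : M \in A -> N \subset M /\ N <| M.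
  rewrite !inE => /andP[/maxgroupp/proper_sub sMH sNM].
  by split; last exact: normalS sNM sMH nsNH.
have injq : {in A &, injective (fun M => (M / N)%G)}.
  move=> M1 M2 /sNM[_ nsNM1] /sNM[_ nsNM2] /(congr1 val) /= eqM12.
  exact/val_inj/(quotient_inj nsNM1 nsNM2).
rewrite -(card_in_imset injq) subset_leq_card //.
apply/subsetP=> _ /imsetP[M AM ->]; have [_ nsNM] := sNM M AM.
by move: AM; rewrite !inE => /andP[maxM _]; rewrite quotient_maximal.
Qed.

(** * Normal complements of a minimal normal abelian subgroup *)

Section NormalComplements.

Variable gT : finGroupType.
Implicit Types A B C D H W Y : {group gT}.

Lemma subset_TI_mulg_eq A Y1 Y2 :
  Y1 \subset Y2 -> A :&: Y2 = 1 -> A * Y2 \subset A * Y1 -> Y1 :=: Y2.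
Proof.
move=> sY12 tiAY2 /subset_leq_card; rewrite TI_cardMg // => leAY21.
apply/eqP; rewrite eqEcard sY12 -(leq_pmul2l (cardG_gt0 A)).
by apply: leq_trans leAY21 _; rewrite mul_cardG leq_pmulr ?cardG_gt0.
Qed.

Lemma minnormal_normedE A H Y :
  minnormal A H -> Y \subset A -> H \subset 'N(Y) -> Y :=: 1 \/ Y :=: A.
Proof.
case/mingroupP=> _ minA sYA nYH.
have [-> | ntY] := eqsVneq Y 1; [by left | right].
by apply: minA; rewrite // ntY.
Qed.

Definition normal_cover (H C W : {set gT}) :=
  forall Y : {group gT}, Y <| H -> C \subset Y -> Y \subset W -> Y :=: C \/ Y :=: W.

(* When B centralizes A and A :&: B = 1, these are the graphs of the
   H-equivariant homomorphisms from B / C to A. *)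
Definition normal_compls (H A B C : {set gT}) :=
  [set D : {group gT} in [complements to A in A * B] | (D <| H) && (C \subset D)].

Lemma normal_complsP H A B C D :
  reflect [/\ D <| H, C \subset D, A :&: D = 1 & A * D = A * B]
          (D \in normal_compls H A B C).
Proof.
rewrite inE; apply: (iffP andP) => [[/complP[tiAD defAD] /andP[]] | [nsDH sCD tiAD defAD]].
  by [].
by rewrite nsDH sCD; split=> //; apply/complP.
Qed.

Section MinimalNormalAbelian.

Variables H A : {group gT}.
Hypotheses (minA : minnormal A H) (cAA : abelian A) (sAH : A \subset H).

Let nsAH : A <| H.
Proof. by rewrite /normal sAH; case/mingroupP: minA => /andP[]. Qed.

Lemma normal_compls_cent B C D :
  B \subset 'C(A) -> D \in normal_compls H A B C -> D \subset 'C(A).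
Proof.
move=> cAB /normal_complsP[_ _ _ defAD].
by apply: subset_trans (mulG_subr A D) _; rewrite defAD mul_subG.
Qed.

Lemma card_normal_compls B C D :
  A :&: B = 1 -> D \in normal_compls H A B C -> #|D| = #|B|.
Proof.
move=> tiAB /normal_complsP[_ _ tiAD defAD].
by apply/eqP; rewrite -(eqn_pmul2l (cardG_gt0 A)) -!TI_cardMg // defAD.
Qed.

Lemma normal_compls_cover C W D :
    W <| H -> C \subset W -> A :&: W = 1 -> W \subset 'C(A) -> normal_cover H C W ->
  D \in normal_compls H A W C -> normal_cover H C D.
Proof.
move=> nsWH sCW tiAW cAW coverW SD Y nsYH sCY sYD.
have /normal_complsP[nsDH sCD tiAD defAD] := SD.
have cAY : Y \subset 'C(A) := subset_trans sYD (normal_compls_cent cAW SD).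
have tiAY : A :&: Y = 1 by apply/trivgP; rewrite -tiAD setIS.
have defAY : A <*> Y = A * Y := cent_joinEr cAY.
have sAY_AW : A * Y \subset A * W by rewrite -defAD mulgS.
have nsZH : (A <*> Y) :&: W <| H by rewrite normalI ?normalY.
have sCZ : C \subset (A <*> Y) :&: W.
  by rewrite subsetI sCW (subset_trans sCY) ?joing_subr.
case: (coverW _ nsZH sCZ (subsetIr _ _)) => /= [eqZC | eqZW].
  left; symmetry; apply: subset_TI_mulg_eq sCY tiAY _.
  by rewrite -eqZC setIC group_modl ?joing_subl //= subsetI sAY_AW defAY subxx.
right; apply: subset_TI_mulg_eq sYD tiAD _.
by rewrite defAD -defAY mul_subG ?joing_subl // -eqZW subsetIl.
Qed.

Section ChiefFactor.

Variables C W : {group gT}.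
Hypotheses (nsWH : W <| H) (ltCW : C \proper W).
Hypotheses (tiAW : A :&: W = 1) (cAW : W \subset 'C(A)).
Hypothesis coverW : normal_cover H C W.

Let sCW : C \subset W. Proof. exact: proper_sub ltCW. Qed.
Let coverS D := normal_compls_cover (D := D) nsWH sCW tiAW cAW coverW.

Lemma card_normal_compls_chief_le_minnormal : #|normal_compls H A W C| <= #|A|.
Proof.
(* D is determined by the a in A with w * a in D, for a fixed w in W \ C. *)
have [_ [w Ww notCw]] := properP ltCW.
pose f D := odflt 1 [pick a in A | w * a \in D].
have fP D : D \in normal_compls H A W C -> f D \in A /\ w * f D \in D.
  rewrite /f; case: pickP => [a /andP[] // | noa] SD.
  have /normal_complsP[nsDH _ _ defAD] := SD.
  have : w \in D * A.
    rewrite (normC (subset_trans (normal_sub nsDH) (normal_norm nsAH))).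
    by rewrite defAD (subsetP (mulG_subr _ _)).
  by case/mulsgP=> d a Dd Aa defw; have := noa a^-1; rewrite groupV Aa defw mulgK Dd.
have injf : {in normal_compls H A W C &, injective f}.
  move=> D1 D2 SD1 SD2 eqf; have [_ D1wa] := fP D1 SD1; have [Aa D2wa] := fP D2 SD2.
  rewrite eqf in D1wa; have /normal_complsP[nsD1H sCD1 _ _] := SD1.
  have /normal_complsP[nsD2H sCD2 _ _] := SD2.
  have notCwa : w * f D2 \notin C.
    apply: contra notCw => Cwa; have : f D2 \in A :&: W.
      by rewrite inE Aa -(groupMl _ Ww) (subsetP sCW).
    by rewrite tiAW => /set1P defa; rewrite defa mulg1 in Cwa.
  have sC_D12 : C \subset D1 :&: D2 by rewrite subsetI sCD1.
  have [eqC | eqD1] := coverS SD1 (normalI nsD1H nsD2H) sC_D12 (subsetIl _ _).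
    by case/negP: notCwa; rewrite -eqC inE D1wa.
  apply: val_inj; apply/eqP.
  rewrite eqEcard (card_normal_compls tiAW SD1) (card_normal_compls tiAW SD2) leqnn andbT.
  by rewrite /= -eqD1 subsetIr.
rewrite -(card_in_imset injf); apply: subset_leq_card.
by apply/subsetP=> _ /imsetP[D SD ->]; case: (fP D SD).
Qed.

Lemma card_minnormal_le_index D :
  D \in normal_compls H A W C -> D != W -> #|A| <= #|W : C|.
Proof.
move=> SD neDW; have /normal_complsP[nsDH sCD tiAD defAD] := SD.
have oD := card_normal_compls tiAW SD.
have nWD : D \subset 'N(W) := subset_trans (normal_sub nsDH) (normal_norm nsWH).
have notsDW : ~~ (D \subset W).
  by apply: contra neDW => sDW; rewrite -val_eqE eqEcard sDW oD leqnn.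
have tiDW : D :&: W = C.
  have sC_DW : C \subset D :&: W by rewrite subsetI sCD.
  have [// | eqDW] := coverS SD (normalI nsDH nsWH) sC_DW (subsetIl _ _).
  by case/negP: notsDW; rewrite -eqDW subsetIr.
have sA_DW : A \subset D <*> W.
  have nsA_DW : A :&: (D <*> W) <| H by rewrite normalI ?normalY.
  have [tiA_DW | <-] := minnormal_normedE minA (subsetIl _ _) (normal_norm nsA_DW).
    have sAD_AW : A * (D <*> W) \subset A * W.
      rewrite -cent_joinEr // mul_subG ?joing_subl // join_subG joing_subr andbT.
      by rewrite /= (cent_joinEr cAW) -defAD mulG_subr.
    have eqW := subset_TI_mulg_eq (joing_subr D W) tiA_DW sAD_AW.
    by case/negP: notsDW; rewrite eqW joing_subl.
  exact: subsetIr.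
have oDW : (#|(D * W)%g| * #|C| = #|W| * #|W|)%N by rewrite -tiDW -mul_cardG oD.
have leAW_DW : #|A| * #|W| <= #|D * W|.
  by rewrite -(TI_cardMg tiAW) subset_leq_card // -(norm_joinEl nWD) mul_subG ?joing_subr.
rewrite -divgS // leq_divRL // -(leq_pmul2r (cardG_gt0 W)) mulnAC -oDW.
by rewrite leq_mul2r leAW_DW orbT.
Qed.

Lemma card_normal_compls_chief : #|normal_compls H A W C| <= #|W : C|.
Proof.
have [sSW | /subsetPn[D SD]] := boolP (normal_compls H A W C \subset [set W]).
  by rewrite (leq_trans (subset_leq_card sSW)) ?cards1 ?indexg_gt0.
rewrite inE => neDW; apply: leq_trans card_normal_compls_chief_le_minnormal _.
exact: card_minnormal_le_index SD neDW.
Qed.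

End ChiefFactor.

Lemma normal_compls_meet_join B C W D :
    B \subset 'C(A) -> W <| H -> C \subset W -> W \subset B ->
    D \in normal_compls H A B C ->
  (D :&: (A <*> W))%G \in normal_compls H A W C.
Proof.
move=> cAB nsWH sCW sWB /normal_complsP[nsDH sCD tiAD defAD].
apply/normal_complsP; split.
- by rewrite normalI ?normalY.
- by rewrite subsetI sCD (subset_trans sCW) ?joing_subr.
- by apply/trivgP; rewrite -tiAD setIS ?subsetIl.
rewrite /= group_modl ?joing_subl // defAD -(cent_joinEr cAB).
rewrite (setIidPr _) /= ?(cent_joinEr (subset_trans sWB cAB)) //.
by rewrite mul_subG ?joing_subl // (subset_trans sWB) ?joing_subr.
Qed.

Lemma normal_compls_over (B C1 C2 E D Ds : {group gT}) :
    D \in normal_compls H A B C1 -> Ds \in normal_compls H A B C2 -> E \subset D ->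
  D \in normal_compls H A Ds E.
Proof.
move=> /normal_complsP[nsDH _ tiAD defAD] /normal_complsP[_ _ _ defADs] sED.
by apply/normal_complsP; rewrite nsDH sED tiAD defAD defADs.
Qed.

Lemma card_normal_compls_le C B :
    C <| H -> B <| H -> C \subset B -> A :&: B = 1 -> B \subset 'C(A) ->
  #|normal_compls H A B C| <= #|B : C|.
Proof.
have [n] := ubnP #|B : C|; elim: n B C => // n IHn B C ltBCn nsCH nsBH sCB tiAB cAB.
have [eqCB | ltCB] := eqVproper sCB.
  have -> : #|B : C| = 1%N by rewrite -eqCB indexgg.
  rewrite -(cards1 B) subset_leq_card //; apply/subsetP=> D SD.
  have /normal_complsP[_ sCD _ _] := SD.
  by rewrite inE eq_sym -val_eqE eqEcard /= (card_normal_compls tiAB SD) -eqCB sCD leqnn.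
have gPB : [pred W : {group gT} | (W <| H) && (C \proper W)] B.
  by rewrite /= nsBH ltCB.
have [W /mingroupP[/andP[nsWH ltCW] minW] sWB] := mingroup_exists gPB.
have sCW := proper_sub ltCW.
have tiAW : A :&: W = 1 by apply/trivgP; rewrite -tiAB setIS.
have cAW : W \subset 'C(A) := subset_trans sWB cAB.
have coverW : normal_cover H C W.
  move=> Y nsYH sCY sYW; have [eqCY | ltCY] := eqVproper sCY; first by left.
  by right; apply: minW => //=; rewrite nsYH.
have ltBW_BC : #|B : W| < #|B : C|.
  rewrite -(Lagrange_index sWB sCW) ltn_Pmulr ?indexg_gt0 //.
  by rewrite indexg_gt1 proper_subn.
pose proj D := (D :&: (A <*> W))%G.
have projS : {in normal_compls H A B C, forall D, proj D \in normal_compls H A W C}.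
  by move=> D; apply: normal_compls_meet_join.
apply: leq_trans (card_le_fibers (f := proj) (k := #|B : W|) projS _) _; last first.
  by rewrite mulnC -(Lagrange_index sWB sCW) leq_mul2l card_normal_compls_chief ?orbT.
move=> D1 SD1; set F := [set _ in _ | _].
have [-> | [Ds]] := set_0Vmem F; first by rewrite cards0.
rewrite inE => /andP[SDs /eqP projDs].
have /normal_complsP[nsDsH _ tiADs _] := SDs; have /normal_complsP[nsD1H _ _ _] := SD1.
have sD1Ds : D1 \subset Ds by rewrite -projDs subsetIl.
have iDs : #|Ds : D1| = #|B : W|.
  by rewrite -!divgS // (card_normal_compls tiAB SDs) (card_normal_compls tiAW SD1).
rewrite -iDs; apply: leq_trans (IHn Ds D1 _ nsD1H nsDsH sD1Ds tiADs _); last 2 first.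
- by rewrite iDs (leq_trans ltBW_BC) // -ltnS.
- exact: normal_compls_cent cAB SDs.
apply: subset_leq_card; apply/subsetP=> D; rewrite inE => /andP[SD /eqP projD].
by apply: normal_compls_over SD SDs _; rewrite -projD subsetIl.
Qed.

End MinimalNormalAbelian.

End NormalComplements.

(** * Complements of a minimal normal subgroup *)

Section Complements.

Variable gT : finGroupType.
Implicit Types D G H M N P S T X : {group gT}.

Lemma minnormal_max_compl H N M :
    minnormal N H -> N \subset H -> abelian N ->
  maximal M H -> ~~ (N \subset M) -> M \in [complements to N in H].
Proof.
move=> minN sNH cNN maxM notsNM; have sMH := proper_sub (maxgroupp maxM).
have nNM : M \subset 'N(N).
  by apply: subset_trans sMH _; case/mingroupP: minN => /andP[].
have defH : N * M = H.
  have sNM_H : N <*> M \subset H by rewrite join_subG sNH.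
  have [eqNM | <-] := maximal_sandwich maxM (joing_subr N M) sNM_H.
    by case/negP: notsNM; rewrite -eqNM joing_subl.
  by rewrite /= norm_joinEr.
apply/complP; split=> //.
have nNM_H : H \subset 'N(N :&: M).
  rewrite -defH mulG_subG [M \subset _]normsI ?normG // andbT cents_norm // centsC.
  exact: subset_trans (subsetIl _ _) cNN.
have [// | eqNM] := minnormal_normedE minN (subsetIl N M) nNM_H.
by case/negP: notsNM; rewrite -eqNM subsetIr.
Qed.

Lemma compl_centI_mul H N M :
  abelian N -> M \in [complements to N in H] -> N * 'C_M(N) = 'C_H(N).
Proof. by move=> cNN /complP[_ defH]; rewrite group_modl // defH. Qed.

Lemma compl_centI_normal H N M :
    N <| H -> abelian N -> M \in [complements to N in H] -> 'C_M(N) <| H.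
Proof.
move=> /andP[sNH nNH] cNN complM; have /complP[_ defH] := complM.
have sMH : M \subset H by rewrite -defH mulG_subr.
rewrite /normal subIset ?sMH //= -defH mulG_subG; apply/andP; split.
  by apply: cents_norm; rewrite centsC subsetIr.
by rewrite normsI ?normG ?norms_cent ?(subset_trans sMH).
Qed.

Lemma normal_card2_central H N : H \subset 'N(N) -> #|N| = 2 -> H \subset 'C(N).
Proof.
move=> nNH oN; have prN : prime #|N| by rewrite oN.
have [z defN] := cyclicP (prime_cyclic prN).
have oz : #[z] = 2 by rewrite -oN defN.
rewrite defN cent_cycle; apply/subsetP=> h Hh; apply/cent1P.
have : z ^ h \in <[z]> by rewrite memJ_norm ?cycle_id // -defN (subsetP nNH).
case/cycleP=> i; rewrite -expg_mod_order oz.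
have : i %% 2 < 2 by rewrite ltn_pmod.
case: (i %% 2) => [|[|//]] _ zh.
  by move/eqP: zh; rewrite expg0 conjg_eq1 -order_eq1 oz.
by rewrite /commute -{1}(expg1 z) -zh conjgE mulKVg.
Qed.

Lemma abelem_central_compl p H N M :
    p.-abelem N -> H \subset 'C(N) -> M \in [complements to N in H] ->
  p.-abelem (H / N) -> p.-abelem H.
Proof.
move=> abelN cNH /complP[tiNM defH] abelHN.
have sMH : M \subset H by rewrite -defH mulG_subr.
have cNM := subset_trans sMH cNH.
have defNM : N \x M = H by rewrite dprodE.
rewrite (dprod_abelem p defNM) abelN.
rewrite (isog_abelem (quotient_isog (cents_norm cNM) tiNM)).
by rewrite /= -quotientMidl defH.
Qed.

Lemma joing_Sylow_pnat_index q X D S :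
    D \subset X -> S \subset 'N(D) -> q.-Sylow(X) S -> q.-nat #|X : D| ->
  D <*> S = X.
Proof.
move=> sDX nDS sylS qXD; have /and3P[sSX _ q'XS] := sylS.
have sDS_X : D <*> S \subset X by rewrite join_subG sDX.
apply/eqP; rewrite eqEsubset sDS_X -indexg_eq1 /=; apply/eqP; apply: (pnat_1 (pi := q)).
  by apply: pnat_dvd qXD; apply: indexgS; apply: joing_subl.
by apply: pnat_dvd q'XS; apply: indexgS; apply: joing_subr.
Qed.

Lemma pnat_index_meet_cent_neq1 (p : nat) N T D :
    p.-group N -> N :!=: 1 -> T \subset 'N(N) ->
    D \subset T -> T \subset 'N(D) -> D \subset 'C(N) -> p.-nat #|T : D| ->
  N :&: 'C(T) != 1.
Proof.
move=> pN ntN nNT sDT nDT cND pTD; have [P sylP] := Sylow_exists p T.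
have sPT := pHall_sub sylP; have nNP := subset_trans sPT nNT.
have defT := joing_Sylow_pnat_index sDT (subset_trans sPT nDT) sylP pTD.
have pNP : p.-group (N <*> P) by rewrite norm_joinEr // pgroupM pN (pHall_pgroup sylP).
have nsN_NP : N <| N <*> P by rewrite /normal joing_subl join_subG normG.
apply: contraNneq (meet_center_nil (pgroup_nil pNP) nsN_NP ntN) => tiNCT.
rewrite -subG1 -tiNCT subsetI subsetIl /= -defT centY subsetI.
rewrite (subset_trans (subsetIl _ _)) 1?centsC //.
rewrite centsC; apply: subset_trans (subsetIr _ _) _.
apply: subset_trans (subsetIr _ _) _; exact: centS (joing_subr _ _).
Qed.

Lemma exists_normal_pnat_index G D :
    solvable G -> D <| G -> D \proper G ->
  exists (q : nat) (T : {group gT}), [/\ D \proper T, T <| G & q.-nat #|T : D|].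
Proof.
move=> solG nsDG ltDG; have [sDG nDG] := andP nsDG.
have ntGD : G / D != 1 by rewrite -subG1 quotient_sub1 // proper_subn.
have [Y minY sYGD] := minnormal_exists ntGD (normG (G / D)).
have [nYG ntY /is_abelemP[q _ /abelem_pgroup qY]] :=
  minnormal_solvable minY sYGD (quotient_sol D solG).
pose T := (coset D @*^-1 Y)%G; have sDT : D \subset T := sub_cosetpre Y.
have nsTG : T <| G.
  by rewrite -(quotientGK nsDG) cosetpre_normal /normal sYGD.
have defY : T / D = Y := cosetpreK Y.
have nDT : T \subset 'N(D) := subset_trans (normal_sub nsTG) nDG.
exists q, T; split=> //; last by rewrite -card_quotient // defY.
rewrite properE sDT -(quotient_sub1 nDT) defY.
by apply: contra ntY => sY1; rewrite eqEsubset sY1 sub1G.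
Qed.

Lemma compl_conj_pnat_index (p q : nat) N T M D :
    p.-group N -> q != p -> T \subset 'N(N) -> N :&: T = 1 ->
    M \in [complements to N in N * T] -> D \subset M -> D \subset T ->
    N * T \subset 'N(D) -> q.-nat #|T : D| ->
  exists2 n, n \in N & M :^ n = T.
Proof.
move=> pN neq_qp nNT tiNT /complP[tiNM defNM] sDM sDT nD_NT qTD.
have defNT : N <*> T = N * T := norm_joinEr nNT.
have sMNT : M \subset N <*> T by rewrite defNT -defNM mulG_subr.
have nDM : M \subset 'N(D) by rewrite (subset_trans sMNT) // defNT.
have nDT : T \subset 'N(D) by apply: subset_trans nD_NT; rewrite mulG_subr.
have oM : #|M| = #|T|.
  by apply/eqP; rewrite -(eqn_pmul2l (cardG_gt0 N)) -!TI_cardMg // defNM.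
have qMD : q.-nat #|M : D| by rewrite -divgS // oM divgS.
have [SM sylSM] := Sylow_exists q M; have [ST sylST] := Sylow_exists q T.
have sSM_M := pHall_sub sylSM; have sST_T := pHall_sub sylST.
have defM := joing_Sylow_pnat_index sDM (subset_trans sSM_M nDM) sylSM qMD.
have defT := joing_Sylow_pnat_index sDT (subset_trans sST_T nDT) sylST qTD.
have sylST_NT : q.-Sylow(N <*> T) ST.
  rewrite pHallE (subset_trans sST_T) ?joing_subr //= (card_Hall sylST) defNT.
  rewrite TI_cardMg // partnM // (@part_p'nat q #|N|) ?mul1n //.
  by apply: sub_in_pnat pN => r _; rewrite !inE => /eqP->; rewrite eq_sym.
have [x NTx sSMx] := Sylow_Jsub sylST_NT (subset_trans sSM_M sMNT) (pHall_pgroup sylSM).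
have defSMx : SM :^ x = ST.
  by apply/eqP; rewrite eqEcard sSMx cardJg (card_Hall sylST) (card_Hall sylSM) oM leqnn.
have [n Nn [t Tt defx]] : exists2 n, n \in N & exists2 t, t \in T & x = n * t.
  by move: NTx; rewrite /= defNT => /mulsgP[n t Nn Tt ->]; exists n => //; exists t.
exists n => //.
have Dn : D :^ n = D by apply: (normsP nD_NT); rewrite (subsetP (mulG_subl _ _)).
have Dt : D :^ t^-1 = D by apply: (normsP nDT); rewrite groupV.
rewrite -defM conjYg Dn -{1}Dt.
rewrite (_ : SM :^ n = ST :^ t^-1) -?conjYg ?defT ?(conjGid (groupVr Tt)) //.
by rewrite -defSMx defx conjsgM conjsgK.
Qed.

Section MinimalNormal.

Variables (H N : {group gT}) (p : nat).
Hypotheses (minN : minnormal N H) (sNH : N \subset H) (abelN : p.-abelem N).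

Let nNH : H \subset 'N(N). Proof. by case/mingroupP: minN => /andP[]. Qed.
Let nsNH : N <| H. Proof. by rewrite /normal sNH nNH. Qed.
Let cNN : abelian N. Proof. exact: abelem_abelian abelN. Qed.
Let pN : p.-group N. Proof. exact: abelem_pgroup abelN. Qed.
Let ntN : N :!=: 1. Proof. by case/mingroupP: minN => /andP[]. Qed.

Lemma compl_normalizer_eq M T :
  M \in [complements to N in H] -> T <| M -> N :&: 'C(T) = 1 -> H :&: 'N(T) :=: M.
Proof.
move=> complM /andP[sTM nTM] tiNCT; have /complP[tiNM defH] := complM.
have sMH : M \subset H by rewrite -defH mulG_subr.
have tiNT : N :&: T = 1 by apply/trivgP; rewrite -tiNM setIS.
have cT_NNT : N :&: 'N(T) \subset 'C(T).
  apply/commG1P/trivgP; rewrite -tiNT commg_subI // subsetI ?subxx //.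
  by rewrite (subset_trans sTM) ?(subset_trans sMH).
symmetry; apply: (@subset_TI_mulg_eq _ N).
- by rewrite subsetI sMH.
- apply/trivgP; rewrite -tiNCT subsetI subsetIl (subset_trans _ cT_NNT) //.
  by rewrite setIS ?subsetIr.
by rewrite defH mul_subG ?subsetIl.
Qed.

Lemma card_compl M : M \in [complements to N in H] -> #|M| = #|H : N|.
Proof.
case/complP=> tiNM defH; apply/eqP.
by rewrite -(eqn_pmul2l (cardG_gt0 N)) -TI_cardMg // defH Lagrange.
Qed.

Lemma compl_centI_normal_compls M M0 :
    M \in [complements to N in H] -> M0 \in [complements to N in H] ->
  'C_M(N)%G \in normal_compls H N 'C_M0(N) 1.
Proof.
move=> complM complM0; have /complP[tiNM _] := complM.
apply/normal_complsP; split; rewrite ?sub1G ?compl_centI_normal //.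
  by apply/trivgP; rewrite -tiNM setIS ?subsetIl.
by rewrite /= (compl_centI_mul cNN complM) (compl_centI_mul cNN complM0).
Qed.

Lemma card_normal_compls_centI M0 :
  M0 \in [complements to N in H] -> #|normal_compls H N 'C_M0(N) 1| <= #|'C_M0(N)|.
Proof.
move=> complM0; have /complP[tiNM0 _] := complM0.
have tiNK0 : N :&: 'C_M0(N) = 1 by apply/trivgP; rewrite -tiNM0 setIS ?subsetIl.
rewrite -(indexg1 'C_M0(N)) card_normal_compls_le ?normal1 ?sub1G ?subsetIr //.
exact: compl_centI_normal.
Qed.

Lemma card_compls_central :
  H \subset 'C(N) -> #|[complements to N in H]| <= #|H : N|.
Proof.
move=> cNH; have [-> | [M0 complM0]] := set_0Vmem [complements to N in H].
  by rewrite cards0.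
have centI_id M : M \in [complements to N in H] -> 'C_M(N)%G = M.
  case/complP=> _ defH; apply: val_inj; apply/setIidPl.
  by rewrite (subset_trans _ cNH) // -defH mulG_subr.
rewrite -(card_compl complM0) -(centI_id M0 complM0).
apply: leq_trans (card_normal_compls_centI complM0); apply: subset_leq_card.
apply/subsetP=> M complM; rewrite -(centI_id M complM).
exact: compl_centI_normal_compls.
Qed.

Section NonCentral.

Hypotheses (solH : solvable H) (ncHN : ~~ (H \subset 'C(N))).

Lemma compl_centI_proper M : M \in [complements to N in H] -> 'C_M(N) \proper M.
Proof.
case/complP=> _ defH; rewrite properEneq subsetIl andbT.
apply: contraNneq ncHN => defD; rewrite -defH mulG_subG; apply/andP; split.
  exact: cNN.
by rewrite -defD subsetIr.
Qed.

Lemma exists_compl_coprime_factor M :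
    M \in [complements to N in H] ->
  exists (q : nat) (T : {group gT}),
    [/\ 'C_M(N) \proper T, T <| M, q.-nat #|T : 'C_M(N)|, N :&: 'C(T) = 1 & q != p].
Proof.
move=> complM; have /complP[_ defH] := complM.
have sMH : M \subset H by rewrite -defH mulG_subr.
have nsDH := compl_centI_normal nsNH cNN complM.
have nsDM : 'C_M(N) <| M := normalS (subsetIl _ _) sMH nsDH.
have [q [T [ltDT nsTM qTD]]] :=
  exists_normal_pnat_index (solvableS sMH solH) nsDM (compl_centI_proper complM).
have [sTM nTM] := andP nsTM; have sDT := proper_sub ltDT.
have nNT : T \subset 'N(N) := subset_trans (subset_trans sTM sMH) nNH.
have nDT := subset_trans (subset_trans sTM sMH) (normal_norm nsDH).
have tiNCT : N :&: 'C(T) = 1.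
  have nNCT_H : H \subset 'N(N :&: 'C(T)).
    rewrite -defH mulG_subG; apply/andP; split.
      by apply: cents_norm; rewrite centsC (subset_trans (subsetIl _ _) cNN).
    by apply: normsI; rewrite ?norms_cent // (subset_trans sMH).
  have [// | eqNCT] := minnormal_normedE minN (subsetIl _ _) nNCT_H.
  case/negP: (proper_subn ltDT); rewrite subsetI sTM centsC.
  by rewrite -eqNCT subsetIr.
exists q, T; split=> //; apply/eqP=> eq_qp; rewrite eq_qp in qTD.
have := pnat_index_meet_cent_neq1 pN ntN nNT sDT nDT (subsetIr _ _) qTD.
by rewrite tiNCT eqxx.
Qed.

Lemma compls_conj_of_centI_eq M1 M2 :
    M1 \in [complements to N in H] -> M2 \in [complements to N in H] ->
    'C_M1(N) = 'C_M2(N) ->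
  exists2 x, x \in N & M2 :=: M1 :^ x.
Proof.
(* T / C_M1(N) is a q-group with q != p, so Sylow conjugacy in N * T moves M2
   into the normalizer of T in H, which is M1. *)
move=> complM1 complM2 eqC.
have /complP[tiNM1 defH1] := complM1; have /complP[tiNM2 defH2] := complM2.
have sM1H : M1 \subset H by rewrite -defH1 mulG_subr.
have [q [T [ltDT nsTM1 qTD tiNCT neq_qp]]] := exists_compl_coprime_factor complM1.
have [sTM1 nTM1] := andP nsTM1; have sDT := proper_sub ltDT.
have nNT : T \subset 'N(N) := subset_trans (subset_trans sTM1 sM1H) nNH.
pose NT := (N <*> T)%G; have defNT : N <*> T = N * T := norm_joinEr nNT.
have sNT_H : NT \subset H by rewrite join_subG sNH (subset_trans sTM1).
have nNT_H : H \subset 'N(NT).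
  rewrite -defH1 mulG_subG (subset_trans (joing_subl N T)) ?normG //=.
  apply: normsY; [exact: subset_trans sM1H nNH | exact: nTM1].
have tiNT : N :&: T = 1 by apply/trivgP; rewrite -tiNM1 setIS.
have complM2T : (M2 :&: NT)%G \in [complements to N in N * T].
  apply/complP; split; first by apply/trivgP; rewrite -tiNM2 setIS ?subsetIl.
  by rewrite /= group_modl ?joing_subl // defH2 (setIidPr sNT_H).
have sDM2T : 'C_M1(N) \subset M2 :&: NT.
  by rewrite subsetI eqC subsetIl -eqC (subset_trans sDT) ?joing_subr.
have nD_NT : N * T \subset 'N('C_M1(N)).
  by rewrite -defNT (subset_trans sNT_H) ?normal_norm ?compl_centI_normal.
have [n Nn defT] :=
  compl_conj_pnat_index pN neq_qp nNT tiNT complM2T sDM2T sDT nD_NT qTD.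
have sM2nH : M2 :^ n \subset H.
  by rewrite -(conjGid (subsetP sNH n Nn)) conjSg -defH2 mulG_subr.
have sM2n_M1 : M2 :^ n \subset M1.
  rewrite -(compl_normalizer_eq complM1 nsTM1 tiNCT) subsetI sM2nH -defT /= conjIg.
  rewrite (conjGid (subsetP (joing_subl N T) n Nn)).
  by apply: normsI; rewrite ?normG // (subset_trans sM2nH).
exists n^-1; rewrite ?groupV //.
have /eqP <- : M2 :^ n == M1 :> {set gT}.
  by rewrite eqEcard sM2n_M1 cardJg (card_compl complM1) (card_compl complM2) /=.
by rewrite conjsgK.
Qed.

Lemma card_compls_noncentral :
  #|[complements to N in H]| * 2 <= #|H : N| * #|N|.
Proof.
have [-> | [M0 complM0]] := set_0Vmem [complements to N in H].
  by rewrite cards0.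
set K0 := 'C_M0(N).
have le_fibers : #|[complements to N in H]| <= #|K0| * #|N|.
  pose centI M := 'C_M(N)%G; pose S := normal_compls H N K0 1.
  apply: leq_trans (card_le_fibers (B := S) (f := centI) (k := #|N|) _ _) _.
  - by move=> M complM; apply: compl_centI_normal_compls.
  - move=> D _; set F := [set _ in _ | _].
    have [-> | [M1]] := set_0Vmem F; first by rewrite cards0.
    rewrite inE => /andP[complM1 /eqP defD].
    apply: leq_trans (leq_imset_card (fun x => (M1 :^ x)%G) N).
    apply: subset_leq_card; apply/subsetP=> M; rewrite inE => /andP[complM /eqP defDM].
    have eqC : 'C_M1(N) = 'C_M(N) by rewrite -[LHS]/(gval (centI M1)) defD -defDM.
    have [x Nx defM] := compls_conj_of_centI_eq complM1 complM eqC.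
    by apply/imsetP; exists x => //; apply: val_inj.
  by rewrite leq_mul2r card_normal_compls_centI ?orbT.
have le2K0 : #|K0| * 2 <= #|H : N|.
  rewrite -(card_compl complM0) -(Lagrange (subsetIl M0 'C(N))) leq_mul2l.
  by rewrite indexg_gt1 proper_subn ?orbT ?compl_centI_proper.
apply: leq_trans (leq_mul le_fibers (leqnn 2)) _.
by rewrite mulnAC leq_mul2r le2K0 orbT.
Qed.

End NonCentral.

Lemma card_compls_minnormal :
    solvable H ->
  #|[complements to N in H]| <= #|H : N| * (#|N| - 1) /\
  (#|[complements to N in H]| = #|H : N| * (#|N| - 1) -> #|N| = 2)%N.
Proof.
move=> solH; have gt1N : 1 < #|N| by rewrite cardG_gt1.
have gt0i := indexg_gt0 H N.
have [cNH | ncNH] := boolP (H \subset 'C(N)).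
  have le_i := card_compls_central cNH.
  have le_iN : #|H : N| <= #|H : N| * (#|N| - 1) by rewrite leq_pmulr // subn_gt0.
  split=> [|eq_i]; first exact: leq_trans le_i le_iN.
  have : #|H : N| * (#|N| - 1) <= #|H : N| * 1 by rewrite muln1 -eq_i.
  by rewrite leq_pmul2l //; clear -gt1N; lia.
have gt2N : 2 < #|N|.
  rewrite ltn_neqAle gt1N andbT; apply: contra ncNH => /eqP oN.
  exact: normal_card2_central.
have le_half := card_compls_noncentral solH ncNH.
have : #|H : N| * 3 <= #|H : N| * #|N| by rewrite leq_mul2l gt2N orbT.
rewrite mulnBr muln1; clear -le_half gt0i; lia.
Qed.

End MinimalNormal.

End Complements.

(** * Maximal subgroups of solvable groups *)

Lemma solvable_card_max_subgroups_le (gT : finGroupType) (H : {group gT}) :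
    solvable H ->
  #|max_subgroups H| <= #|H| - 1 /\ (#|max_subgroups H| = #|H| - 1 -> 2.-abelem H).
Proof.
have [n] := ubnP #|H|; elim: n gT H => // n IHn gT H ltHn solH.
have [trivH | ntH] := eqsVneq H 1.
  suff -> : max_subgroups H = set0 by rewrite cards0 trivH cards1 abelem1.
  apply/setP=> M; rewrite !inE; apply/negP=> /maxgroupp/proper_card.
  by rewrite trivH cards1 ltnNge cardG_gt0.
have [N minN sNH] := minnormal_exists ntH (normG H).
have [nNH ntN /is_abelemP[p _ abelN]] := minnormal_solvable minN sNH solH.
have nsNH : N <| H by rewrite /normal sNH.
have ltHNn : #|H / N| < n := leq_trans (ltn_quotient ntN sNH) ltHn.
have [leHN eqHN] := IHn _ (H / N)%G ltHNn (quotient_sol N solH).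
have [leC eqC] := card_compls_minnormal minN sNH abelN solH.
set overN := [set M : {group gT} | N \subset M].
have sA2C : max_subgroups H :\: overN \subset [complements to N in H].
  apply/subsetP=> M; rewrite 3!inE => /andP[notsNM maxM].
  exact: minnormal_max_compl minN sNH (abelem_abelian abelN) maxM notsNM.
rewrite card_quotient ?normal_norm // in leHN eqHN.
have leA1 := leq_trans (card_max_subgroups_over nsNH) leHN.
have leA2 := leq_trans (subset_leq_card sA2C) leC.
have idx : (#|H : N| - 1 + #|H : N| * (#|N| - 1) = #|H| - 1)%N.
  have gt0i := indexg_gt0 H N; have := leq_pmulr #|H : N| (cardG_gt0 N).
  rewrite -(Lagrange sNH) mulnBr muln1 mulnC; clear -gt0i; lia.
have le_sum := leqif_add (leqif_eq leA1) (leqif_eq leA2).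
rewrite -(cardsID overN) -idx; split; first exact: le_sum.
move/eqP; rewrite le_sum => /andP[/eqP eqA1 /eqP eqA2].
have abelHN : 2.-abelem (H / N).
  by apply: eqHN; apply/eqP; rewrite eqn_leq leHN -eqA1 card_max_subgroups_over.
have oN : #|N| = 2.
  by apply: eqC; apply/eqP; rewrite eqn_leq leC -eqA2 subset_leq_card.
have [M A2M] : exists M, M \in max_subgroups H :\: overN.
  apply/set0Pn; rewrite -card_gt0 eqA2 muln_gt0 indexg_gt0 subn_gt0.
  by rewrite cardG_gt1.
apply: abelem_central_compl (prime_abelem _ oN) _ (subsetP sA2C M A2M) abelHN => //.
exact: normal_card2_central.
Qed.

Lemma solvable_card_max_subgroups (gT : finGroupType) (H : {group gT}) :
  solvable H -> #|max_subgroups H| <= #|H| - 1 ?= iff 2.-abelem H.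
Proof.
move=> /solvable_card_max_subgroups_le[le_max eq_max]; split=> //.
apply/idP/idP => [/eqP/eq_max // | /abelem2_card_max_subgroups ge_max].
by rewrite eqn_leq le_max.
Qed.

Unset Implicit Arguments.

Theorem lemma2p1 (gT : finGroupType) (G H : {group gT})
    (solG : solvable G) (sHG : H \subset G) :
  (subgraph_deg G H <= #|H| + #|G| %/ #|H| - 2)%N /\
  (subgraph_deg G H = (#|H| + #|G| %/ #|H| - 2)%N <->
     [/\ H <| G, 2.-abelem H & 2.-abelem (G / H)]).
Proof.
have degH := leqif_add (solvable_card_max_subgroups (solvableS sHG solG))
                       (card_max_overgroups_leqif_index sHG).
have gt0H := cardG_gt0 H; have gt0iGH := indexg_gt0 G H.
rewrite -subgraph_degE divgS // in degH *.
have -> : (#|H| + #|G : H| - 2 = #|H| - 1 + (#|G : H| - 1))%N by lia.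
split; first exact: degH.
rewrite (rwP eqP) degH andbA andbC.
by split=> [/and3P[] | [-> -> ->]].
Qed.
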